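(* Let $A,N\in\mathbb{R}^{m\times n}$ and let $\hat A=A+N$. Then for every positive integer $k$, $$\|A-\hat A_k\|_2\le\|A-A_k\|_2+2\|N_k\|_2,$$ $$\|A-\hat A_k\|_F\le\|A-A_k\|_F+\|N_k\|_F+2\sqrt{\|N_k\|_F\,\|A_k\|_F}.$$
   Context: For a matrix $M$, $M_k$ denotes its best rank-$k$ approximation (the truncated SVD keeping the top $k$ singular triplets). $\|\cdot\|_2$ is the spectral norm and $\|\cdot\|_F$ the Frobenius norm. *)

From HB Require Import structures.
From mathcomp Require Import all_boot all_order all_algebra.
From mathcomp Require Import boolp classical_sets reals.
Set Implicit Arguments. Unset Strict Implicit. Unset Printing Implicit Defensive.
Import Order.TTheory GRing.Theory Num.Theory.
Local Open Scope ring_scope.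
Local Open Scope classical_set_scope.

Definition vnorm (R : realType) (n : nat) (x : 'cV[R]_n) : R :=
  Num.sqrt (\sum_(i < n) x i 0 ^+ 2).

(* Spectral norm: operator norm induced by the Euclidean norms,
   sup of |M x|_2 over unit vectors x (sup of the empty set is 0 when n = 0). *)
Definition spec_norm (R : realType) (m n : nat) (M : 'M[R]_(m, n)) : R :=
  sup [set r : R | exists x : 'cV[R]_n, vnorm x = 1 /\ r = vnorm (M *m x)].

Definition frob_norm (R : realType) (m n : nat) (M : 'M[R]_(m, n)) : R :=
  Num.sqrt (\sum_(i < m) \sum_(j < n) M i j ^+ 2).

(* [best_rank_approx M k B] : B is a best rank-k approximation of M obtained
   by truncating an SVD of M, i.e. M = U diag(s) V^T with U, V having
   orthonormal columns and s nonnegative nonincreasing, and B keeps the top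
   k singular triplets. (Any choice of SVD is allowed.) *)
Definition best_rank_approx (R : realType) (m n : nat) (M : 'M[R]_(m, n))
    (k : nat) (B : 'M[R]_(m, n)) : Prop :=
  exists (p : nat) (U : 'M[R]_(m, p)) (V : 'M[R]_(n, p)) (s : 'I_p -> R),
    U^T *m U = 1%:M /\ V^T *m V = 1%:M /\
    (forall i, 0 <= s i) /\
    (forall i j : 'I_p, (i <= j)%N -> s j <= s i) /\
    M = U *m diag_mx (\row_i s i) *m V^T /\
    B = U *m diag_mx (\row_i (if (i < k)%N then s i else 0)) *m V^T.

From HB Require Import structures.
From mathcomp Require Import all_boot all_order all_algebra.
From mathcomp Require Import boolp classical_sets reals.
From mathcomp Require Import ring lra zify.
Set Implicit Arguments. Unset Strict Implicit. Unset Printing Implicit Defensive.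
Import Order.TTheory GRing.Theory Num.Theory.
Local Open Scope ring_scope.

(* Write Ah = A + N and let P, Q be the orthogonal projections onto the top-k
   right singular subspaces of Ah and A, so that Ah_k = Ah P and A_k = A Q.

   Spectral norm: Weyl's inequality gives s_(k+1)(Ah) <= s_(k+1)(A) + |N|_2, hence
   |A - Ah_k|_2 <= |N|_2 + |Ah - Ah_k|_2 <= |A - A_k|_2 + 2 |N|_2, and
   |N|_2 = s_1(N) = |N_k|_2 because k >= 1.

   Frobenius norm: A - Ah_k = A (I - P) - N P. By Ky Fan's maximum principle
   (|M P|_F <= |M_k|_F for every orthogonal projection P of trace at most k) we
   get |N P|_F <= |N_k|_F and |A P|_F >= |Ah P|_F - |N_k|_F >= |Ah Q|_F - |N_k|_F
   >= |A_k|_F - 2 |N_k|_F. Since |A (I - P)|^2 + |A P|^2 = |A|^2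
   = |A - A_k|^2 + |A_k|^2, this lower bound on |A P|_F yields
   |A (I - P)|_F <= |A - A_k|_F + 2 sqrt (|N_k|_F |A_k|_F). *)

Lemma sum_ord_lt (R : pzSemiRingType) (p k : nat) :
  \sum_(i < p) ((i < k)%N%:R : R) = (minn p k)%:R.
Proof.
elim: p => [|p IHp]; first by rewrite big_ord0 min0n.
by rewrite big_ord_recr /= IHp -natrD; congr (_%:R); case: ltnP; lia.
Qed.

Lemma mxtrace_pid_mx (R : pzSemiRingType) (q k : nat) :
  \tr (pid_mx k : 'M[R]_q) = (minn q k)%:R.
Proof. by rewrite -sum_ord_lt; apply: eq_bigr => i _; rewrite mxE eqxx. Qed.

Lemma pid_mx_idem (R : pzSemiRingType) (q k : nat) :
  (pid_mx k : 'M[R]_q) *m (pid_mx k : 'M[R]_q) = pid_mx k.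
Proof. by rewrite mul_pid_mx minnn pid_mx_minh. Qed.

Lemma rank_pid_mx_le (F : fieldType) (p k : nat) :
  (\rank (pid_mx k : 'M[F]_p) <= k)%N.
Proof. by rewrite -pid_mx_minh rank_pid_mx ?geq_minl ?geq_minr. Qed.

(* The vectors supported on the first k+1 coordinates form a space of dimension
   k+1, on which G, of rank at most k, cannot be injective. *)
Lemma exists_prefix_kernel_vector (F : fieldType) (p q k : nat) (G : 'M[F]_(p, q)) :
  (k < q)%N -> (\rank G <= k)%N ->
  exists z : 'cV[F]_q,
    [/\ z != 0, forall i : 'I_q, (k < i)%N -> z i 0 = 0 & G *m z = 0].
Proof.
move=> lt_kq rankG.
set E := (pid_mx k.+1 : 'M[F]_q); set K := kermx (E *m G^T).
have rankEG : (\rank (E *m G^T) <= k)%N.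
  by apply: leq_trans (mxrankM_maxr _ _) _; rewrite mxrank_tr.
have : ~~ (K <= kermx E)%MS.
  by apply/negP => /mxrankS; rewrite !mxrank_ker rank_pid_mx //; lia.
case/row_subPn => j; rewrite sub_kermx => Kj_E.
exists (E *m (row j K)^T); split.
- by rewrite /E -tr_pid_mx -trmx_mul trmx_eq0.
- move=> i lt_ki; rewrite mxE big1 // => l _.
  by rewrite mxE ltnS leqNgt lt_ki andbF mul0r.
- apply: trmx_inj; rewrite trmx0 !trmx_mul trmxK /E tr_pid_mx -mulmxA.
  by apply/eqP; rewrite -sub_kermx row_sub.
Qed.

(* Compare every term with the threshold a_k: (a_i - a_k) (w_i - [i < k]) <= 0. *)
Lemma sum_weighted_le_sum_prefix (R : realDomainType) (p k : nat) (a w : 'I_p -> R) :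
  (forall i j : 'I_p, (i <= j)%N -> a j <= a i) -> (forall i, 0 <= a i) ->
  (forall i, 0 <= w i <= 1) -> \sum_i w i <= k%:R ->
  \sum_i a i * w i <= \sum_(i < p) (if (i < k)%N then a i else 0).
Proof.
move=> a_noninc a_ge0 w01 sum_w.
case: (ltnP k p) => [lt_kp|le_pk]; last first.
  apply: ler_sum => i _; rewrite (leq_trans (ltn_ord i) le_pk).
  by have := w01 i; have := a_ge0 i; nra.
set c := a (Ordinal lt_kp).
have c_ge0 : 0 <= c by apply: a_ge0.
have termwise (i : 'I_p) :
    a i * w i - (if (i < k)%N then a i else 0) <= c * (w i - (i < k)%N%:R).
  have := w01 i; case: ltnP => [lt_ik|le_ki] /=.
    have : c <= a i by apply: a_noninc; rewrite /= ltnW.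
    nra.
  have : a i <= c by apply: a_noninc.
  nra.
have := ler_sum (index_enum 'I_p) (fun i (_ : true) => termwise i).
by rewrite sumrB -mulr_sumr sumrB sum_ord_lt (minn_idPr (ltnW lt_kp)); nra.
Qed.

Lemma pythagorean_leg_le (R : rcfType) (a b c x y : R) :
  0 <= a -> 0 <= b -> 0 <= c -> 0 <= x ->
  x ^+ 2 + y ^+ 2 = a ^+ 2 + b ^+ 2 -> b - 2 * c <= y ->
  x <= a + 2 * Num.sqrt (c * b).
Proof.
move=> a_ge0 b_ge0 c_ge0 x_ge0 pyth le_y.
have t_ge0 := sqrtr_ge0 (c * b).
have t_sqr : Num.sqrt (c * b) ^+ 2 = c * b by rewrite sqr_sqrtr // mulr_ge0.
rewrite -ler_sqr ?nnegrE ?addr_ge0 ?mulr_ge0 //.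
case: (lerP b (2 * c)) => [le_b2c|lt_2cb]; first nra.
have : (b - 2 * c) ^+ 2 <= y ^+ 2 by rewrite ler_sqr ?nnegrE; lra.
nra.
Qed.

Section FrobeniusNorm.
Variable R : realType.

Definition frob_dot (m n : nat) (X Y : 'M[R]_(m, n)) : R := \tr (X^T *m Y).
Definition frob_sq (m n : nat) (X : 'M[R]_(m, n)) : R := \tr (X^T *m X).

Lemma frob_sqE (m n : nat) (M : 'M[R]_(m, n)) :
  frob_sq M = \sum_i \sum_j M i j ^+ 2.
Proof.
rewrite /frob_sq /mxtrace exchange_big /=; apply: eq_bigr => j _.
by rewrite !mxE; apply: eq_bigr => i _; rewrite !mxE expr2.
Qed.

Lemma frob_normE (m n : nat) (M : 'M[R]_(m, n)) :
  frob_norm M = Num.sqrt (frob_sq M).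
Proof. by rewrite /frob_norm frob_sqE. Qed.

Lemma frob_sq_ge0 (m n : nat) (M : 'M[R]_(m, n)) : 0 <= frob_sq M.
Proof. by rewrite frob_sqE; do 2![apply: sumr_ge0 => ? _]; apply: sqr_ge0. Qed.

Lemma frob_sq_eq0 (m n : nat) (M : 'M[R]_(m, n)) : frob_sq M = 0 -> M = 0.
Proof.
move=> /eqP; rewrite frob_sqE psumr_eq0 => [/allP M0|i _]; last first.
  by apply: sumr_ge0 => j _; apply: sqr_ge0.
apply/matrixP => i j; rewrite mxE.
move: (M0 i (mem_index_enum i)) => /implyP /(_ isT).
rewrite psumr_eq0 => [/allP /(_ j (mem_index_enum j)) /implyP /(_ isT)|l _].
  by rewrite sqrf_eq0 => /eqP.
exact: sqr_ge0.
Qed.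

Lemma frob_sq_tr (m n : nat) (M : 'M[R]_(m, n)) : frob_sq M^T = frob_sq M.
Proof. by rewrite /frob_sq trmxK mxtrace_mulC. Qed.

Lemma frob_sq_rows (m n : nat) (M : 'M[R]_(m, n)) :
  frob_sq M = \sum_i frob_sq (row i M).
Proof.
rewrite frob_sqE; apply: eq_bigr => i _.
by rewrite frob_sqE big_ord1; apply: eq_bigr => j _; rewrite mxE.
Qed.

Lemma frob_dotC (m n : nat) (X Y : 'M[R]_(m, n)) : frob_dot X Y = frob_dot Y X.
Proof. by rewrite /frob_dot -mxtrace_tr trmx_mul trmxK. Qed.

Lemma frob_dotNr (m n : nat) (X Y : 'M[R]_(m, n)) :
  frob_dot X (- Y) = - frob_dot X Y.
Proof. by rewrite /frob_dot mulmxN linearN. Qed.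

Lemma frob_sqD (m n : nat) (X Y : 'M[R]_(m, n)) :
  frob_sq (X + Y) = frob_sq X + frob_sq Y + 2 * frob_dot X Y.
Proof.
rewrite /frob_sq [(X + Y)^T]linearD /= mulmxDl !mulmxDr !mxtraceD.
have -> : \tr (Y^T *m X) = frob_dot X Y by rewrite frob_dotC.
rewrite /frob_dot; ring.
Qed.

Lemma frob_dotZ (m n : nat) (a b : R) (X Y : 'M[R]_(m, n)) :
  frob_dot (a *: X) (b *: Y) = a * b * frob_dot X Y.
Proof.
by rewrite /frob_dot [(a *: X)^T]linearZ /= -scalemxAr -scalemxAl !mxtraceZ mulrCA mulrA.
Qed.

Lemma frob_sqZ (m n : nat) (a : R) (X : 'M[R]_(m, n)) :
  frob_sq (a *: X) = a ^+ 2 * frob_sq X.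
Proof. exact: frob_dotZ. Qed.

Lemma frob_sqN (m n : nat) (X : 'M[R]_(m, n)) : frob_sq (- X) = frob_sq X.
Proof. by rewrite -scaleN1r frob_sqZ sqrrN expr1n mul1r. Qed.

Lemma frob_norm_ge0 (m n : nat) (M : 'M[R]_(m, n)) : 0 <= frob_norm M.
Proof. by rewrite frob_normE sqrtr_ge0. Qed.

Lemma frob_norm_sqr (m n : nat) (M : 'M[R]_(m, n)) :
  frob_norm M ^+ 2 = frob_sq M.
Proof. by rewrite frob_normE sqr_sqrtr ?frob_sq_ge0. Qed.

Lemma frob_norm_gt0 (m n : nat) (M : 'M[R]_(m, n)) : M != 0 -> 0 < frob_norm M.
Proof.
move=> M_neq0; rewrite lt0r frob_norm_ge0 andbT; apply: contra M_neq0.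
by rewrite -sqrf_eq0 frob_norm_sqr => /eqP /frob_sq_eq0 ->.
Qed.

Lemma frob_norm0 (m n : nat) : frob_norm (0 : 'M[R]_(m, n)) = 0.
Proof. by rewrite frob_normE /frob_sq mulmx0 mxtrace0 sqrtr0. Qed.

Lemma frob_normN (m n : nat) (X : 'M[R]_(m, n)) : frob_norm (- X) = frob_norm X.
Proof. by rewrite !frob_normE frob_sqN. Qed.

Lemma frob_normZ (m n : nat) (a : R) (X : 'M[R]_(m, n)) :
  frob_norm (a *: X) = `|a| * frob_norm X.
Proof. by rewrite !frob_normE frob_sqZ sqrtrM ?sqr_ge0 // sqrtr_sqr. Qed.

Lemma frob_dot_le (m n : nat) (X Y : 'M[R]_(m, n)) :
  `|frob_dot X Y| <= frob_norm X * frob_norm Y.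
Proof.
suff CS (Z : 'M[R]_(m, n)) : frob_dot X Z <= frob_norm X * frob_norm Z.
  by rewrite ler_norml CS andbT lerNl -frob_dotNr -(frob_normN Y) CS.
set a := frob_norm X; set b := frob_norm Z.
have a_ge0 : 0 <= a := frob_norm_ge0 X; have b_ge0 : 0 <= b := frob_norm_ge0 Z.
have [a0|a_neq0] := eqVneq a 0.
  have /frob_sq_eq0 -> : frob_sq X = 0 by rewrite -frob_norm_sqr -/a a0 expr0n.
  by rewrite /frob_dot trmx0 mul0mx mxtrace0 mulr_ge0.
have [b0|b_neq0] := eqVneq b 0.
  have /frob_sq_eq0 -> : frob_sq Z = 0 by rewrite -frob_norm_sqr -/b b0 expr0n.
  by rewrite /frob_dot mulmx0 mxtrace0 mulr_ge0.
have ab_gt0 : 0 < a * b by rewrite mulr_gt0 // lt0r ?a_neq0 ?b_neq0.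
(* 0 <= |b X - a Z|^2 = 2 a b (a b - <X, Z>) *)
have := frob_sq_ge0 (b *: X - a *: Z).
rewrite frob_sqD frob_sqN !frob_sqZ -!frob_norm_sqr -/a -/b frob_dotNr frob_dotZ.
by move=> expansion_ge0; rewrite -(ler_pM2l ab_gt0); nra.
Qed.

Lemma frob_normD (m n : nat) (X Y : 'M[R]_(m, n)) :
  frob_norm (X + Y) <= frob_norm X + frob_norm Y.
Proof.
rewrite -ler_sqr ?nnegrE ?addr_ge0 ?frob_norm_ge0 // frob_norm_sqr frob_sqD.
rewrite -!frob_norm_sqr; have := frob_dot_le X Y; rewrite ler_norml.
nra.
Qed.

Lemma mulmxE_frob_dot (m n p : nat) (A : 'M[R]_(m, n)) (B : 'M[R]_(n, p)) i j :
  (A *m B) i j = frob_dot (row i A)^T (col j B).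
Proof.
rewrite /frob_dot trmxK /mxtrace big_ord1 !mxE.
by apply: eq_bigr => l _; rewrite !mxE.
Qed.

Lemma frob_norm_mulmx_le (m n p : nat) (A : 'M[R]_(m, n)) (B : 'M[R]_(n, p)) :
  frob_norm (A *m B) <= frob_norm A * frob_norm B.
Proof.
rewrite -ler_sqr ?nnegrE ?mulr_ge0 ?frob_norm_ge0 // exprMn !frob_norm_sqr.
rewrite [frob_sq (A *m B)]frob_sqE frob_sq_rows -frob_sq_tr frob_sq_rows.
rewrite mulr_suml; apply: ler_sum => i _; rewrite mulr_sumr; apply: ler_sum => j _.
rewrite mulmxE_frob_dot -tr_col frob_sq_tr -(frob_sq_tr (row i A)) -!frob_norm_sqr.
rewrite -exprMn -real_normK ?num_real // ler_sqr ?nnegrE ?mulr_ge0 ?frob_norm_ge0 //.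
exact: frob_dot_le.
Qed.

Lemma frob_sq_mull (m n p : nat) (U : 'M[R]_(m, p)) (X : 'M[R]_(p, n)) :
  U^T *m U = 1%:M -> frob_sq (U *m X) = frob_sq X.
Proof. by move=> hU; rewrite /frob_sq trmx_mul -mulmxA (mulmxA U^T) hU mul1mx. Qed.

Lemma frob_sq_mulr (m n p : nat) (X : 'M[R]_(m, p)) (V : 'M[R]_(n, p)) :
  V^T *m V = 1%:M -> frob_sq (X *m V^T) = frob_sq X.
Proof. by move=> hV; rewrite -frob_sq_tr trmx_mul trmxK frob_sq_mull ?frob_sq_tr. Qed.

Lemma vnorm_frob (n : nat) (x : 'cV[R]_n) : vnorm x = frob_norm x.
Proof.
by rewrite /vnorm /frob_norm; congr Num.sqrt; apply: eq_bigr => i _; rewrite big_ord1.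
Qed.

Lemma vnormD (n : nat) (x y : 'cV[R]_n) : vnorm (x + y) <= vnorm x + vnorm y.
Proof. by rewrite !vnorm_frob frob_normD. Qed.

Lemma vnormZ (n : nat) (a : R) (x : 'cV[R]_n) : vnorm (a *: x) = `|a| * vnorm x.
Proof. by rewrite !vnorm_frob frob_normZ. Qed.

Lemma vnorm_mul_orth (n p : nat) (V : 'M[R]_(n, p)) (z : 'cV[R]_p) :
  V^T *m V = 1%:M -> vnorm (V *m z) = vnorm z.
Proof. by move=> orthV; rewrite !vnorm_frob !frob_normE frob_sq_mull. Qed.

End FrobeniusNorm.

Section OrthogonalProjection.
Variable R : realType.

Definition orth_proj (n : nat) (P : 'M[R]_n) : Prop := P^T = P /\ P *m P = P.

Definition colproj (n q : nat) (W : 'M[R]_(n, q)) (k : nat) : 'M[R]_n :=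
  W *m pid_mx k *m W^T.

Lemma frob_sq_pythagoras (m n : nat) (A : 'M[R]_(m, n)) (P : 'M[R]_n) :
  orth_proj P -> frob_sq A = frob_sq (A *m P) + frob_sq (A *m (1%:M - P)).
Proof.
move=> [symP idemP].
have -> : frob_sq A = frob_sq (A *m P + A *m (1%:M - P)).
  by rewrite mulmxBr mulmx1 addrC subrK.
rewrite frob_sqD.
suff -> : frob_dot (A *m P) (A *m (1%:M - P)) = 0 by rewrite mulr0 addr0.
rewrite /frob_dot trmx_mul symP mxtrace_mulC -!mulmxA (mulmxA (1%:M - P)).
by rewrite mulmxBl mul1mx idemP subrr mul0mx mulmx0 mxtrace0.
Qed.

Lemma frob_sq_mul_proj_le (m n : nat) (A : 'M[R]_(m, n)) (P : 'M[R]_n) :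
  orth_proj P -> frob_sq (A *m P) <= frob_sq A.
Proof. by move=> projP; rewrite [leRHS](frob_sq_pythagoras A projP) lerDl frob_sq_ge0. Qed.

Lemma frob_sq_orth_proj (n : nat) (P : 'M[R]_n) : orth_proj P -> frob_sq P = \tr P.
Proof. by move=> [symP idemP]; rewrite /frob_sq symP idemP. Qed.

Lemma orth_proj_colproj (n q : nat) (W : 'M[R]_(n, q)) (k : nat) :
  W^T *m W = 1%:M -> orth_proj (colproj W k).
Proof.
move=> orthW; split; first by rewrite /colproj !trmx_mul trmxK tr_pid_mx mulmxA.
by rewrite /colproj -!mulmxA (mulmxA W^T) orthW mul1mx (mulmxA (pid_mx k)) pid_mx_idem.
Qed.

Lemma mxtrace_colproj_le (n q : nat) (W : 'M[R]_(n, q)) (k : nat) :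
  W^T *m W = 1%:M -> \tr (colproj W k) <= k%:R.
Proof.
move=> orthW; rewrite /colproj mxtrace_mulC mulmxA orthW mul1mx mxtrace_pid_mx.
by rewrite ler_nat geq_minr.
Qed.

Lemma frob_sq_bessel (n p q : nat) (V : 'M[R]_(n, p)) (X : 'M[R]_(n, q)) :
  V^T *m V = 1%:M -> frob_sq (V^T *m X) <= frob_sq X.
Proof.
move=> orthV; rewrite -(frob_sq_mull (V^T *m X) orthV) mulmxA -frob_sq_tr trmx_mul.
have -> : (V *m V^T)^T = colproj V p by rewrite trmx_mul trmxK /colproj pid_mx_1 mulmx1.
by rewrite -[leRHS]frob_sq_tr; apply: frob_sq_mul_proj_le; apply: orth_proj_colproj.
Qed.

End OrthogonalProjection.

Section SpectralNorm.
Variables (R : realType) (m n : nat).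

Let unit_image (M : 'M[R]_(m, n)) :=
  [set r : R | exists x : 'cV[R]_n, vnorm x = 1 /\ r = vnorm (M *m x)]%classic.

Let has_sup_unit_image (M : 'M[R]_(m, n)) :
  (unit_image M !=set0)%classic -> has_sup (unit_image M).
Proof.
move=> ne; split => //; exists (frob_norm M) => _ [x [x1 ->]].
by rewrite !vnorm_frob in x1 *; rewrite -[leRHS]mulr1 -x1 frob_norm_mulmx_le.
Qed.

Lemma vnorm_mul_le_spec (M : 'M[R]_(m, n)) (x : 'cV[R]_n) :
  vnorm (M *m x) <= spec_norm M * vnorm x.
Proof.
have [->|x_neq0] := eqVneq x 0; first by rewrite mulmx0 !vnorm_frob !frob_norm0 mulr0.
have x_gt0 : 0 < vnorm x by rewrite vnorm_frob frob_norm_gt0.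
have inv_ge0 : 0 <= (vnorm x)^-1 by rewrite invr_ge0 ltW.
set y := (vnorm x)^-1 *: x.
have y1 : vnorm y = 1 by rewrite vnormZ ger0_norm // mulVf // gt_eqF.
have My_in : unit_image M (vnorm (M *m y)) by exists y.
have := sup_upper_bound (has_sup_unit_image (ex_intro _ _ My_in)) My_in.
by rewrite /y -scalemxAr vnormZ ger0_norm // mulrC ler_pdivrMr.
Qed.

Lemma spec_norm_le_bound (M : 'M[R]_(m, n)) (c : R) :
  0 <= c -> (forall x : 'cV[R]_n, vnorm (M *m x) <= c * vnorm x) ->
  spec_norm M <= c.
Proof.
move=> c_ge0 Mc; rewrite /spec_norm -/(unit_image M).
have [ne|/nonemptyPn ->] := pselect (unit_image M !=set0)%classic; last first.
  by rewrite sup0.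
by apply: ge_sup => // _ [x [x1 ->]]; rewrite -[leRHS]mulr1 -x1.
Qed.

Lemma spec_norm_ge0 (M : 'M[R]_(m, n)) : 0 <= spec_norm M.
Proof.
rewrite /spec_norm -/(unit_image M).
have [ne|/nonemptyPn ->] := pselect (unit_image M !=set0)%classic; last first.
  by rewrite sup0.
have [r Mr] := ne; apply: le_trans (sup_upper_bound (has_sup_unit_image ne) Mr).
by case: Mr => x [_ ->]; rewrite vnorm_frob frob_norm_ge0.
Qed.

Lemma spec_normD (X Y : 'M[R]_(m, n)) :
  spec_norm (X + Y) <= spec_norm X + spec_norm Y.
Proof.
apply: spec_norm_le_bound => [|x]; first by rewrite addr_ge0 ?spec_norm_ge0.
rewrite mulmxDl mulrDl; apply: le_trans (vnormD _ _) _.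
exact: lerD (vnorm_mul_le_spec X x) (vnorm_mul_le_spec Y x).
Qed.

Lemma spec_normN (X : 'M[R]_(m, n)) : spec_norm (- X) = spec_norm X.
Proof.
have le_N (Y : 'M[R]_(m, n)) : spec_norm (- Y) <= spec_norm Y.
  apply: spec_norm_le_bound => [|x]; first exact: spec_norm_ge0.
  by rewrite mulNmx !vnorm_frob frob_normN -!vnorm_frob vnorm_mul_le_spec.
by apply/le_anti; rewrite le_N -{1}[X]opprK le_N.
Qed.

End SpectralNorm.

Section DiagonalFactorization.
Variables (R : realType) (m n p : nat) (U : 'M[R]_(m, p)) (V : 'M[R]_(n, p)).
Hypotheses (orthU : U^T *m U = 1%:M) (orthV : V^T *m V = 1%:M).

Lemma frob_sq_diag_mul (q : nat) (d : 'rV[R]_p) (Y : 'M[R]_(p, q)) :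
  frob_sq (diag_mx d *m Y) = \sum_i d 0 i ^+ 2 * frob_sq (row i Y).
Proof.
rewrite mul_diag_mx frob_sq_rows; apply: eq_bigr => i _.
rewrite !frob_sqE !big_ord1 mulr_sumr; apply: eq_bigr => j _.
by rewrite !mxE exprMn.
Qed.

Lemma spec_norm_diag_le (d : 'I_p -> R) (c : R) :
  0 <= c -> (forall i, `|d i| <= c) ->
  spec_norm (U *m diag_mx (\row_i d i) *m V^T) <= c.
Proof.
move=> c_ge0 dc; apply: spec_norm_le_bound => // x.
rewrite -!mulmxA !vnorm_frob -ler_sqr ?nnegrE ?mulr_ge0 ?frob_norm_ge0 //.
rewrite exprMn !frob_norm_sqr frob_sq_mull // frob_sq_diag_mul.
apply: le_trans (ler_wpM2l (sqr_ge0 c) (frob_sq_bessel x orthV)).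
rewrite (frob_sq_rows (V^T *m x)) mulr_sumr; apply: ler_sum => i _.
apply: ler_wpM2r; first exact: frob_sq_ge0.
by rewrite mxE -real_normK ?num_real // ler_sqr ?nnegrE.
Qed.

Lemma vnorm_diag_mul_ge (d : 'I_p -> R) (c : R) (l : nat) (z : 'cV[R]_p) :
  0 <= c -> (forall i : 'I_p, (i <= l)%N -> c <= d i) ->
  (forall i : 'I_p, (l < i)%N -> z i 0 = 0) ->
  c * vnorm z <= vnorm (U *m diag_mx (\row_i d i) *m V^T *m (V *m z)).
Proof.
move=> c_ge0 cd zl; rewrite -!mulmxA (mulmxA V^T) orthV mul1mx !vnorm_frob.
rewrite -ler_sqr ?nnegrE ?mulr_ge0 ?frob_norm_ge0 //.
rewrite exprMn !frob_norm_sqr frob_sq_mull // frob_sq_diag_mul frob_sq_rows mulr_sumr.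
apply: ler_sum => i _; rewrite mxE; case: (leqP i l) => [le_il|lt_li].
  apply: ler_wpM2r; first exact: frob_sq_ge0.
  have c_le := cd i le_il.
  by rewrite ler_sqr ?nnegrE ?c_le ?(le_trans c_ge0 c_le).
by rewrite frob_sqE !big_ord1 mxE zl // expr0n !mulr0.
Qed.

End DiagonalFactorization.

Definition svd_of (R : realType) (m n p : nat) (M : 'M[R]_(m, n))
    (U : 'M[R]_(m, p)) (V : 'M[R]_(n, p)) (s : 'I_p -> R) : Prop :=
  [/\ U^T *m U = 1%:M, V^T *m V = 1%:M, forall i, 0 <= s i,
      forall i j : 'I_p, (i <= j)%N -> s j <= s i
    & M = U *m diag_mx (\row_i s i) *m V^T].

Definition svd_trunc (R : realType) (m n p : nat) (U : 'M[R]_(m, p))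
    (V : 'M[R]_(n, p)) (s : 'I_p -> R) (k : nat) : 'M[R]_(m, n) :=
  U *m diag_mx (\row_i (if (i < k)%N then s i else 0)) *m V^T.

Lemma best_rank_approx_svd (R : realType) (m n : nat) (M B : 'M[R]_(m, n)) (k : nat) :
  best_rank_approx M k B ->
  exists p (U : 'M[R]_(m, p)) V s, svd_of M U V s /\ B = svd_trunc U V s k.
Proof. by case=> p [U [V [s [? [? [? [? [? ->]]]]]]]]; exists p, U, V, s. Qed.

Section TruncatedSvd.
Variables (R : realType) (m n p : nat) (M : 'M[R]_(m, n)).
Variables (U : 'M[R]_(m, p)) (V : 'M[R]_(n, p)) (s : 'I_p -> R).
Hypothesis svdM : svd_of M U V s.

Lemma svd_trunc_colproj (k : nat) : M *m colproj V k = svd_trunc U V s k.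
Proof.
have [_ orthV _ _ ->] := svdM; rewrite /svd_trunc.
have -> : diag_mx (\row_i (if (i < k)%N then s i else 0)) =
          diag_mx (\row_i s i) *m pid_mx k.
  apply/matrixP => i j; rewrite mul_diag_mx !mxE.
  have -> : (i == j :> nat) = (i == j) by [].
  by case: ltnP => _; case: (i == j); rewrite ?mulr1 ?mulr0.
by rewrite /colproj !mulmxA -(mulmxA _ V^T V) orthV mulmx1.
Qed.

Lemma frob_sq_svd_trunc (k : nat) :
  frob_sq (svd_trunc U V s k) = \sum_(i < p) (if (i < k)%N then s i ^+ 2 else 0).
Proof.
have [orthU orthV _ _ _] := svdM.
rewrite /svd_trunc frob_sq_mulr // frob_sq_mull // frob_sqE.
apply: eq_bigr => i _; rewrite (bigD1 i) //= big1 => [|j /negbTE ij].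
  by rewrite !mxE eqxx mulr1n addr0; case: ifP; rewrite // expr0n.
by rewrite !mxE eq_sym ij mulr0n expr0n.
Qed.

Lemma frob_norm_mul_proj_le_trunc (P : 'M[R]_n) (k : nat) :
  orth_proj P -> \tr P <= k%:R -> frob_norm (M *m P) <= frob_norm (svd_trunc U V s k).
Proof.
move=> projP trP; rewrite -ler_sqr ?nnegrE ?frob_norm_ge0 // !frob_norm_sqr.
rewrite frob_sq_svd_trunc; have [orthU orthV s_ge0 s_noninc ->] := svdM.
rewrite -!mulmxA frob_sq_mull // frob_sq_diag_mul; under eq_bigr do rewrite mxE.
apply: sum_weighted_le_sum_prefix => [i j le_ij|i|i|].
- by have := s_noninc i j le_ij; have := s_ge0 j; nra.
- exact: sqr_ge0.
- rewrite frob_sq_ge0 row_mul; apply: le_trans (frob_sq_mul_proj_le _ projP) _.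
  rewrite -tr_col frob_sq_tr.
  have -> : frob_sq (col i V) = (V^T *m V) i i by rewrite mulmxE_frob_dot tr_row trmxK.
  by rewrite orthV mxE eqxx.
- rewrite -frob_sq_rows; apply: le_trans (frob_sq_bessel P orthV) _.
  by rewrite frob_sq_orth_proj.
Qed.

Lemma spec_norm_sub_svd_trunc_le (k : nat) (c : R) :
  0 <= c -> (forall i : 'I_p, (k <= i)%N -> s i <= c) ->
  spec_norm (M - svd_trunc U V s k) <= c.
Proof.
move=> c_ge0 sc; have [orthU orthV s_ge0 _ eM] := svdM.
have -> : M - svd_trunc U V s k =
          U *m diag_mx (\row_i (if (i < k)%N then 0 else s i)) *m V^T.
  rewrite eM /svd_trunc -mulmxBl -mulmxBr; congr (_ *m _ *m _).
  by apply/matrixP => i j; rewrite !mxE -mulrnBl; case: ifP; rewrite ?subrr ?subr0.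
apply: spec_norm_diag_le => // i.
by case: ltnP => [_|le_ki]; rewrite ?normr0 // ger0_norm ?sc.
Qed.

End TruncatedSvd.

Section Perturbation.
Variables (R : realType) (m n p q : nat).

(* Weyl's inequality s_(k+1)(Ah) <= s_(k+1)(A) + |Ah - A|_2: test Ah on a nonzero
   vector of the span of its top k+1 right singular vectors that A_k kills. *)
Lemma svd_weyl (A Ah : 'M[R]_(m, n)) (U : 'M[R]_(m, p)) (V : 'M[R]_(n, p)) s
    (Uh : 'M[R]_(m, q)) (Vh : 'M[R]_(n, q)) sh (k : nat) (i : 'I_q) :
  svd_of A U V s -> svd_of Ah Uh Vh sh -> (k <= i)%N ->
  sh i <= spec_norm (A - svd_trunc U V s k) + spec_norm (Ah - A).
Proof.
move=> svdA svdAh le_ki; have [orthUh orthVh sh_ge0 sh_noninc eAh] := svdAh.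
have lt_kq : (k < q)%N := leq_ltn_trans le_ki (ltn_ord i).
apply: le_trans (sh_noninc (Ordinal lt_kq) i le_ki) _.
set G := (pid_mx k : 'M[R]_p) *m V^T *m Vh.
have rankG : (\rank G <= k)%N.
  by do 2![apply: leq_trans (mxrankM_maxl _ _) _]; apply: rank_pid_mx_le.
have [z [z_neq0 z_prefix Gz]] := exists_prefix_kernel_vector lt_kq rankG.
have trunc_Vhz : svd_trunc U V s k *m (Vh *m z) = 0.
  have -> : svd_trunc U V s k *m (Vh *m z) = A *m V *m (G *m z).
    by rewrite -(svd_trunc_colproj svdA) /colproj /G !mulmxA.
  by rewrite Gz mulmx0.
have lower : sh (Ordinal lt_kq) * vnorm z <= vnorm (Ah *m (Vh *m z)).
  rewrite eAh; apply: (vnorm_diag_mul_ge orthUh orthVh (l := k)) => //.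
  by move=> j le_jk; apply: sh_noninc.
have upper : vnorm (Ah *m (Vh *m z)) <=
    (spec_norm (A - svd_trunc U V s k) + spec_norm (Ah - A)) * vnorm z.
  have -> : Ah *m (Vh *m z) =
      (A - svd_trunc U V s k) *m (Vh *m z) + (Ah - A) *m (Vh *m z).
    by rewrite !mulmxBl trunc_Vhz subr0 addrC subrK.
  rewrite -(vnorm_mul_orth z orthVh) mulrDl; apply: le_trans (vnormD _ _) _.
  exact: lerD (vnorm_mul_le_spec _ _) (vnorm_mul_le_spec _ _).
have z_gt0 : 0 < vnorm z by rewrite vnorm_frob frob_norm_gt0.
by rewrite -(ler_pM2r z_gt0) (le_trans lower upper).
Qed.

Lemma spec_norm_sub_svd_trunc_perturb (A Ah : 'M[R]_(m, n)) (U : 'M[R]_(m, p))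
    (V : 'M[R]_(n, p)) s (Uh : 'M[R]_(m, q)) (Vh : 'M[R]_(n, q)) sh (k : nat) :
  svd_of A U V s -> svd_of Ah Uh Vh sh ->
  spec_norm (Ah - svd_trunc Uh Vh sh k) <=
    spec_norm (A - svd_trunc U V s k) + spec_norm (Ah - A).
Proof.
move=> svdA svdAh; apply: (spec_norm_sub_svd_trunc_le svdAh) => [|i le_ki].
  by rewrite addr_ge0 ?spec_norm_ge0.
exact: svd_weyl svdA svdAh le_ki.
Qed.

(* Both norms equal the top singular value s_1. *)
Lemma spec_norm_le_svd_trunc (N : 'M[R]_(m, n)) (U : 'M[R]_(m, p)) (V : 'M[R]_(n, p))
    s (k : nat) :
  (0 < k)%N -> svd_of N U V s -> spec_norm N <= spec_norm (svd_trunc U V s k).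
Proof.
move=> k_gt0 svdN; have [orthU orthV s_ge0 s_noninc eN] := svdN.
have [p0|p_gt0] := posnP p.
  apply: le_trans (spec_norm_ge0 _); rewrite eN.
  by apply: spec_norm_diag_le => // i; have := ltn_ord i; rewrite {2}p0.
set i0 := Ordinal p_gt0.
have N_le : spec_norm N <= s i0.
  by rewrite eN; apply: spec_norm_diag_le => // i; rewrite ger0_norm ?s_noninc.
apply: le_trans N_le _.
set e : 'cV[R]_p := delta_mx i0 0.
have e_gt0 : 0 < vnorm e.
  rewrite vnorm_frob frob_norm_gt0 //; apply/eqP => /matrixP /(_ i0 0) /eqP.
  by rewrite !mxE !eqxx oner_eq0.
have lower : s i0 * vnorm e <= vnorm (svd_trunc U V s k *m (V *m e)).
  apply: (vnorm_diag_mul_ge orthU orthV (l := 0) (s_ge0 i0)) => [i|i i_gt0].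
    by rewrite leqn0 => /eqP i_0; rewrite (_ : i = i0) ?k_gt0 //; apply: val_inj.
  by rewrite mxE andbT; case: eqVneq => [ei|//]; rewrite ei in i_gt0.
have upper := vnorm_mul_le_spec (svd_trunc U V s k) (V *m e).
rewrite (vnorm_mul_orth e orthV) in upper.
by rewrite -(ler_pM2r e_gt0) (le_trans lower upper).
Qed.

End Perturbation.

Section NoisyTruncation.
Variables (R : realType) (m n p pn q k : nat) (A N : 'M[R]_(m, n)).
Variables (U : 'M[R]_(m, p)) (V : 'M[R]_(n, p)) (s : 'I_p -> R).
Variables (Un : 'M[R]_(m, pn)) (Vn : 'M[R]_(n, pn)) (sn : 'I_pn -> R).
Variables (Uh : 'M[R]_(m, q)) (Vh : 'M[R]_(n, q)) (sh : 'I_q -> R).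
Hypotheses (svdA : svd_of A U V s) (svdN : svd_of N Un Vn sn).
Hypothesis svdAh : svd_of (A + N) Uh Vh sh.

Lemma spec_norm_sub_svd_trunc_noisy : (0 < k)%N ->
  spec_norm (A - svd_trunc Uh Vh sh k) <=
    spec_norm (A - svd_trunc U V s k) + 2 * spec_norm (svd_trunc Un Vn sn k).
Proof.
move=> k_gt0.
have -> : A - svd_trunc Uh Vh sh k = A + N - svd_trunc Uh Vh sh k - N.
  by rewrite addrAC addrK.
have := spec_norm_sub_svd_trunc_perturb k svdA svdAh.
rewrite [A + N - A]addrAC subrr add0r.
have := spec_norm_le_svd_trunc k_gt0 svdN.
have := spec_normD (A + N - svd_trunc Uh Vh sh k) (- N); rewrite spec_normN.
lra.
Qed.

Lemma frob_norm_sub_svd_trunc_noisy :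
  frob_norm (A - svd_trunc Uh Vh sh k) <=
    frob_norm (A - svd_trunc U V s k) + frob_norm (svd_trunc Un Vn sn k) +
    2 * Num.sqrt (frob_norm (svd_trunc Un Vn sn k) * frob_norm (svd_trunc U V s k)).
Proof.
have [_ orthV _ _ _] := svdA; have [_ orthVh _ _ _] := svdAh.
set P := colproj Vh k; set Q := colproj V k.
have projP : orth_proj P := orth_proj_colproj k orthVh.
have projQ : orth_proj Q := orth_proj_colproj k orthV.
have trP : \tr P <= k%:R := mxtrace_colproj_le k orthVh.
have trQ : \tr Q <= k%:R := mxtrace_colproj_le k orthV.
set c := frob_norm (svd_trunc Un Vn sn k).
have NP : frob_norm (N *m P) <= c := frob_norm_mul_proj_le_trunc svdN projP trP.
have NQ : frob_norm (N *m Q) <= c := frob_norm_mul_proj_le_trunc svdN projQ trQ.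
rewrite -(svd_trunc_colproj svdAh) -(svd_trunc_colproj svdA) -/P -/Q.
have AhQ : frob_norm ((A + N) *m Q) <= frob_norm ((A + N) *m P).
  by rewrite /P (svd_trunc_colproj svdAh) frob_norm_mul_proj_le_trunc.
have AhP : frob_norm ((A + N) *m P) <= frob_norm (A *m P) + frob_norm (N *m P).
  by rewrite mulmxDl frob_normD.
have AQ : frob_norm (A *m Q) <= frob_norm ((A + N) *m Q) + frob_norm (N *m Q).
  rewrite -(frob_normN (N *m Q)); apply: le_trans (frob_normD _ _).
  by rewrite mulmxDl addrK.
have pyth : frob_norm (A *m (1%:M - P)) ^+ 2 + frob_norm (A *m P) ^+ 2 =
            frob_norm (A *m (1%:M - Q)) ^+ 2 + frob_norm (A *m Q) ^+ 2.
  rewrite !frob_norm_sqr addrC -(frob_sq_pythagoras A projP).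
  by rewrite (frob_sq_pythagoras A projQ) addrC.
have AP_ge : frob_norm (A *m Q) - 2 * c <= frob_norm (A *m P) by lra.
have c_ge0 : 0 <= c := frob_norm_ge0 _.
have := pythagorean_leg_le (frob_norm_ge0 _) (frob_norm_ge0 _) c_ge0 (frob_norm_ge0 _)
  pyth AP_ge.
have -> : A - (A + N) *m P = A *m (1%:M - P) - N *m P.
  by rewrite mulmxBr mulmx1 mulmxDl opprD addrA.
have -> : A - A *m Q = A *m (1%:M - Q) by rewrite mulmxBr mulmx1.
have := frob_normD (A *m (1%:M - P)) (- (N *m P)); rewrite frob_normN.
lra.
Qed.

End NoisyTruncation.

Theorem mainTheorem18 (R : realType) (m n : nat) (A N : 'M[R]_(m, n)) (k : nat)
    (Ak Nk Ahatk : 'M[R]_(m, n)) :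
  (0 < k)%N ->
  best_rank_approx A k Ak ->
  best_rank_approx N k Nk ->
  best_rank_approx (A + N) k Ahatk ->
  spec_norm (A - Ahatk) <= spec_norm (A - Ak) + 2 * spec_norm Nk /\
  frob_norm (A - Ahatk) <=
    frob_norm (A - Ak) + frob_norm Nk + 2 * Num.sqrt (frob_norm Nk * frob_norm Ak).
Proof.
move=> k_gt0 /best_rank_approx_svd [p [U [V [s [svdA ->]]]]].
move=> /best_rank_approx_svd [pn [Un [Vn [sn [svdN ->]]]]].
move=> /best_rank_approx_svd [q [Uh [Vh [sh [svdAh ->]]]]].
split; first exact: spec_norm_sub_svd_trunc_noisy svdA svdN svdAh k_gt0.
exact: frob_norm_sub_svd_trunc_noisy svdA svdN svdAh.
Qed.
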